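(* Let $\zeta:G\to(0,\infty)$, with $G\subseteq\mathbb{R}^2$ open, be twice continuously differentiable. Then: (i) if $G$ is convex, then $\partial_x\partial_y\log\zeta\equiv0$ on $G$ if and only if $\zeta$ is separable; (ii) $\zeta$ is strictly non-separable if and only if the open set $G':=\{z\in G:\partial_x\partial_y\log\zeta(z)\neq0\}$ is dense in $G$; (iii) if $\mathcal{O}\subseteq G'$ is symmetric, open and convex, then $(\partial_x\partial_y\log\zeta)|_{\mathcal{O}}$ is separable and symmetric if and only if $\zeta|_{\mathcal{O}}$ is pseudo-Gaussian.
   Context: For $G\subseteq\mathbb{R}^2$ open, a function $\varsigma:G\to\mathbb{R}$ is pseudo-Gaussian if there are functions $\varsigma_1,\varsigma_2,\varsigma_3:\mathbb{R}\to\mathbb{R}$ and a fixed sign $\pm$ with $\varsigma(x,y)=\varsigma_1(x)\varsigma_2(y)\exp(\pm\varsigma_3(x)\varsigma_3(y))$ on all of $G$; it is separable if this holds with $\varsigma_3\equiv0$ (i.e. $\varsigma(x,y)=\varsigma_1(x)\varsigma_2(y)$). $\varsigma$ is strictly non-separable if $\varsigma|_{\mathcal{O}}$ is not separable for every nonempty open $\mathcal{O}\subseteq G$. A set $A\subseteq\mathbb{R}^2$ is symmetric if $\tau(A)=A$ for $\tau(u,v)=(v,u)$, and a function $\varphi$ on such a set is symmetric if $\varphi\circ\tau=\varphi$. *)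

From Stdlib Require Import Reals.
From Coquelicot Require Import Coquelicot.
Open Scope R_scope.

Definition dx (f : R * R -> R) (z : R * R) : R :=
  Derive (fun t => f (t, snd z)) (fst z).
Definition dy (f : R * R -> R) (z : R * R) : R :=
  Derive (fun t => f (fst z, t)) (snd z).

Definition C1_on (G : R * R -> Prop) (f : R * R -> R) : Prop :=
  forall z, G z ->
    ex_derive (fun t => f (t, snd z)) (fst z) /\
    ex_derive (fun t => f (fst z, t)) (snd z) /\
    continuous f z /\ continuous (dx f) z /\ continuous (dy f) z.

Definition C2_on (G : R * R -> Prop) (f : R * R -> R) : Prop :=
  C1_on G f /\ C1_on G (dx f) /\ C1_on G (dy f).

Definition dxdy_log (zeta : R * R -> R) : R * R -> R :=
  dx (dy (fun z => ln (zeta z))).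

Definition convex_set (A : R * R -> Prop) : Prop :=
  forall z w t, A z -> A w -> 0 <= t <= 1 ->
    A (fst z + t * (fst w - fst z), snd z + t * (snd w - snd z)).

Definition symmetric_set (A : R * R -> Prop) : Prop :=
  forall u v, A (u, v) <-> A (v, u).

Definition symmetric_on (A : R * R -> Prop) (phi : R * R -> R) : Prop :=
  forall u v, A (u, v) -> phi (v, u) = phi (u, v).

Definition separable_on (A : R * R -> Prop) (phi : R * R -> R) : Prop :=
  exists s1 s2 : R -> R, forall z, A z -> phi z = s1 (fst z) * s2 (snd z).

Definition pseudo_gaussian_on (A : R * R -> Prop) (phi : R * R -> R) : Prop :=
  exists (s1 s2 s3 : R -> R) (s : R), (s = 1 \/ s = -1) /\
    forall z, A z ->
      phi z = s1 (fst z) * s2 (snd z) * exp (s * (s3 (fst z) * s3 (snd z))).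

Definition strictly_non_separable_on (G : R * R -> Prop) (phi : R * R -> R) : Prop :=
  forall O : R * R -> Prop, open O -> (exists z, O z) ->
    (forall z, O z -> G z) -> ~ separable_on O phi.

Definition dense_in (D G : R * R -> Prop) : Prop :=
  forall z, G z -> forall eps : R, 0 < eps ->
    exists w, D w /\ Rabs (fst w - fst z) < eps /\ Rabs (snd w - snd z) < eps.

(* Write L = ln zeta and phi = dx (dy L).  If phi = 0 on a convex set, then dy L depends on y
   alone, so integrating in y gives L = a(x) + b(y), i.e. zeta is separable; conversely, when
   zeta is separable, the rows L(x', .) - L(x, .) are constant and the mixed derivative vanishes.
   Part (ii) is the local form of (i) on small squares.  For (iii), a separable, symmetric and
   nowhere vanishing phi has the form c f(x) f(y): the ratio of its two factors is locally
   constant, hence constant on the (interval) projection of O.  Then L - c F(x) F(y), with F a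
   primitive of f, has zero mixed derivative, and c = +-k^2 gives the pseudo-Gaussian form.
   Conversely, for a pseudo-Gaussian zeta, L(x', u) - L(x, u) is affine in s3(u) with slope
   +-(s3 x' - s3 x); since phi <> 0 this slope is not locally zero, which makes s3
   differentiable and gives phi = +-s3'(x) s3'(y). *)

From Stdlib Require Import Reals Lra Psatz Classical ClassicalEpsilon.
From Coquelicot Require Import Coquelicot.
Open Scope R_scope.

Definition is_interval (I : R -> Prop) : Prop :=
  forall a b t, I a -> I b -> Rmin a b <= t <= Rmax a b -> I t.

Lemma segment_param a b t :
  Rmin a b <= t <= Rmax a b -> exists s, 0 <= s <= 1 /\ t = a + s * (b - a).
Proof.
  intros Ht. destruct (Req_dec a b) as [<- | Hab].
  - exists 0. unfold Rmin, Rmax in Ht. destruct (Rle_dec a a); lra.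
  - exists ((t - a) / (b - a)). split; [|field; lra].
    assert (E : t - a = (t - a) / (b - a) * (b - a)) by (field; lra).
    revert E. generalize ((t - a) / (b - a)). intros s E.
    unfold Rmin, Rmax in Ht. destruct (Rle_dec a b); split; nra.
Qed.

Lemma convex_set_row (U : R * R -> Prop) x x' y t :
  convex_set U -> U (x, y) -> U (x', y) -> Rmin x x' <= t <= Rmax x x' -> U (t, y).
Proof.
  intros HU H1 H2 Ht. destruct (segment_param x x' t Ht) as [s [Hs ->]].
  generalize (HU _ _ s H1 H2 Hs); simpl. replace (y + s * (y - y)) with y by ring. trivial.
Qed.

Lemma convex_set_col (U : R * R -> Prop) x y y' t :
  convex_set U -> U (x, y) -> U (x, y') -> Rmin y y' <= t <= Rmax y y' -> U (x, t).
Proof.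
  intros HU H1 H2 Ht. destruct (segment_param y y' t Ht) as [s [Hs ->]].
  generalize (HU _ _ s H1 H2 Hs); simpl. replace (x + s * (x - x)) with x by ring. trivial.
Qed.

Lemma is_interval_proj2 (U : R * R -> Prop) :
  convex_set U -> is_interval (fun y => exists x, U (x, y)).
Proof.
  intros HU a b t [xa Ha] [xb Hb] Ht. destruct (segment_param a b t Ht) as [s [Hs ->]].
  exists (xa + s * (xb - xa)). exact (HU _ _ s Ha Hb Hs).
Qed.

Lemma open_locally_2d (U : R * R -> Prop) x y :
  open U -> U (x, y) -> locally_2d (fun u v => U (u, v)) x y.
Proof.
  intros HU Hxy. apply locally_2d_locally.
  apply (filter_imp U); [intros [u v] Huv; exact Huv | exact (HU _ Hxy)].
Qed.

Lemma locally_row_of_open (U : R * R -> Prop) x y :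
  open U -> U (x, y) -> locally x (fun u => U (u, y)).
Proof. intros HU Hxy. exact (locally_2d_1d_const_y _ _ _ (open_locally_2d U x y HU Hxy)). Qed.

Lemma locally_col_of_open (U : R * R -> Prop) x y :
  open U -> U (x, y) -> locally y (fun v => U (x, v)).
Proof. intros HU Hxy. exact (locally_2d_1d_const_x _ _ _ (open_locally_2d U x y HU Hxy)). Qed.

Lemma locally_rows_of_open (U : R * R -> Prop) x y :
  open U -> U (x, y) -> locally x (fun x' => locally y (fun u => U (x', u) /\ U (x, u))).
Proof.
  intros HU Hxy. destruct (open_locally_2d U x y HU Hxy) as [d Hd].
  exists d. intros x' Hx'. exists d. intros u Hu.
  split; apply Hd; try assumption. exact (ball_center x d).
Qed.

Lemma open_proj2 (U : R * R -> Prop) : open U -> open (fun y => exists x, U (x, y)).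
Proof.
  intros HU y [x Hxy].
  apply (filter_imp (fun v => U (x, v))); [intros v Hv; exists x; exact Hv|].
  exact (locally_col_of_open U x y HU Hxy).
Qed.

Definition square (c : R * R) (d : R) (w : R * R) : Prop :=
  Rabs (fst w - fst c) < d /\ Rabs (snd w - snd c) < d.

Lemma square_center c d : 0 < d -> square c d c.
Proof. intros Hd. unfold square. rewrite !Rminus_eq_0, Rabs_R0. lra. Qed.

Lemma open_square c d : open (square c d).
Proof.
  intros [x y] [Hx Hy]; simpl in *.
  set (e := Rmin (d - Rabs (x - fst c)) (d - Rabs (y - snd c))).
  assert (He : 0 < e) by (apply Rmin_glb_lt; lra).
  assert (e <= d - Rabs (x - fst c)) by apply Rmin_l.
  assert (e <= d - Rabs (y - snd c)) by apply Rmin_r.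
  exists (mkposreal e He). intros [u v] [Hu Hv].
  change (Rabs (u - x) < e) in Hu. change (Rabs (v - y) < e) in Hv.
  split; simpl.
  - replace (u - fst c) with ((u - x) + (x - fst c)) by ring.
    eapply Rle_lt_trans; [apply Rabs_triang | lra].
  - replace (v - snd c) with ((v - y) + (y - snd c)) by ring.
    eapply Rle_lt_trans; [apply Rabs_triang | lra].
Qed.

Lemma convex_square c d : convex_set (square c d).
Proof.
  assert (Hseg : forall a b e t, Rabs (a - e) < d -> Rabs (b - e) < d -> 0 <= t <= 1 ->
             Rabs (a + t * (b - a) - e) < d).
  { intros a b e t Ha Hb Ht.
    replace (a + t * (b - a) - e) with ((1 - t) * (a - e) + t * (b - e)) by ring.
    eapply Rle_lt_trans; [apply Rabs_triang|]. rewrite !Rabs_mult.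
    rewrite (Rabs_pos_eq (1 - t)) by lra. rewrite (Rabs_pos_eq t) by lra.
    destruct (Rle_dec (Rabs (a - e)) (Rabs (b - e))); nra. }
  intros z w t [H1 H2] [H3 H4] Ht. split; apply Hseg; assumption.
Qed.

Lemma continuous_col (f : R * R -> R) x y :
  continuous f (x, y) -> continuous (fun t => f (x, t)) y.
Proof.
  intros Hf. apply (continuous_comp (fun t => (x, t)) f); [|exact Hf].
  intros P [e He]. exists e. intros t Ht. apply He. split; [apply ball_center | exact Ht].
Qed.

Lemma eq_of_is_derive_0 (f : R -> R) a b :
  (forall t, Rmin a b <= t <= Rmax a b -> is_derive f t 0) -> f a = f b.
Proof.
  intros Hf. destruct (MVT_gen f a b (fun _ => 0)) as [c [_ Hc]].
  - intros t Ht. apply Hf. lra.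
  - intros t Ht. apply continuity_pt_filterlim, (ex_derive_continuous (V := R_NormedModule)).
    exists 0. exact (Hf t Ht).
  - lra.
Qed.

Lemma antiderivative_on_interval (I : R -> Prop) (k : R -> R) :
  is_interval I -> open I -> (forall y, I y -> continuous k y) ->
  exists K : R -> R, forall y, I y -> is_derive K y (k y).
Proof.
  intros HI HIo Hk. destruct (classic (exists p, I p)) as [[p Hp] | Hempty].
  - exists (RInt k p). intros y Hy. apply (is_derive_RInt k _ p y); [|exact (Hk y Hy)].
    apply (filter_imp I); [|exact (HIo y Hy)].
    intros b Hb. apply (RInt_correct (V := R_CompleteNormedModule)).
    apply (ex_RInt_continuous (V := R_CompleteNormedModule)).
    intros t Ht. exact (Hk t (HI p b t Hp Hb Ht)).
  - exists (fun _ => 0). intros y Hy. exfalso. apply Hempty. exists y. exact Hy.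
Qed.

Lemma signed_square c : exists k s, (s = 1 \/ s = -1) /\ c = s * (k * k).
Proof.
  destruct (Rle_dec 0 c) as [Hc | Hc].
  - exists (sqrt c), 1. split; [left; reflexivity|]. rewrite sqrt_sqrt; lra.
  - exists (sqrt (- c)), (-1). split; [right; reflexivity|]. rewrite sqrt_sqrt; lra.
Qed.

Lemma ex_factor_of_indep {A B C : Type} (b0 : B) (P : A -> B -> Prop) (g : A -> B -> C) :
  (forall a b b', P a b -> P a b' -> g a b = g a b') ->
  exists f : A -> C, forall a b, P a b -> g a b = f a.
Proof.
  intros Hg. exists (fun a => g a (epsilon (inhabits b0) (P a))).
  intros a b Hab. apply Hg; [exact Hab|].
  apply (epsilon_spec (inhabits b0) (P a)). exists b. exact Hab.
Qed.

Lemma additive_split_of_dxdy_0 (U : R * R -> Prop) (h : R * R -> R) :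
  open U -> convex_set U ->
  (forall z, U z -> ex_derive (fun t => h (fst z, t)) (snd z)) ->
  (forall z, U z -> is_derive (fun t => dy h (t, snd z)) (fst z) 0) ->
  (forall z, U z -> continuous (fun t => dy h (fst z, t)) (snd z)) ->
  exists a b : R -> R, forall z, U z -> h z = a (fst z) + b (snd z).
Proof.
  intros HUo HUc Hy Hxy Hcont.
  assert (Hrow : forall y x x', U (x, y) -> U (x', y) -> dy h (x, y) = dy h (x', y)).
  { intros y x x' H1 H2. apply (eq_of_is_derive_0 (fun t => dy h (t, y))). intros t Ht.
    exact (Hxy (t, y) (convex_set_row U x x' y t HUc H1 H2 Ht)). }
  destruct (ex_factor_of_indep 0 (fun y x => U (x, y)) (fun y x => dy h (x, y)) Hrow)
    as [k Hk].
  destruct (antiderivative_on_interval (fun y => exists x, U (x, y)) k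
              (is_interval_proj2 U HUc) (open_proj2 U HUo)) as [K HK].
  { intros y [x Hx]. apply (continuous_ext_loc _ (fun t => dy h (x, t))).
    - apply (filter_imp (fun t => U (x, t))); [intros t Ht; apply Hk, Ht|].
      exact (locally_col_of_open U x y HUo Hx).
    - exact (Hcont (x, y) Hx). }
  assert (Hcol : forall x y y', U (x, y) -> U (x, y') -> h (x, y) - K y = h (x, y') - K y').
  { intros x y y' H1 H2. apply (eq_of_is_derive_0 (fun t => h (x, t) - K t)). intros t Ht.
    pose proof (convex_set_col U x y y' t HUc H1 H2 Ht) as Hxt.
    replace 0 with (dy h (x, t) - k t) by (rewrite (Hk t x Hxt); ring).
    apply (is_derive_minus (V := R_NormedModule)).
    - exact (Derive_correct _ _ (Hy (x, t) Hxt)).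
    - apply HK. exists x. exact Hxt. }
  destruct (ex_factor_of_indep 0 (fun x y => U (x, y)) (fun x y => h (x, y) - K y) Hcol)
    as [a Ha].
  exists a, K. intros [x y] Hxy'. simpl. rewrite <- (Ha x y Hxy'). ring.
Qed.

Lemma additive_split_of_dxdy_product (U : R * R -> Prop) (h : R * R -> R) (f g F G : R -> R) :
  open U -> convex_set U ->
  (forall z, U z -> ex_derive (fun t => h (fst z, t)) (snd z)) ->
  (forall z, U z -> is_derive (fun t => dy h (t, snd z)) (fst z) (f (fst z) * g (snd z))) ->
  (forall z, U z -> continuous (fun t => dy h (fst z, t)) (snd z)) ->
  (forall z, U z -> is_derive F (fst z) (f (fst z))) ->
  (forall z, U z -> is_derive G (snd z) (g (snd z))) ->
  (forall z, U z -> continuous g (snd z)) ->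
  exists a b : R -> R, forall z, U z -> h z = a (fst z) + b (snd z) + F (fst z) * G (snd z).
Proof.
  intros HUo HUc Hy Hxy Hcont HF HG Hg.
  set (h0 := fun z => h z - F (fst z) * G (snd z)).
  assert (Hy0 : forall x y, U (x, y) ->
            is_derive (fun t => h0 (x, t)) y (dy h (x, y) - F x * g y)).
  { intros x y Hxy'. apply (is_derive_minus (V := R_NormedModule)).
    - exact (Derive_correct _ _ (Hy _ Hxy')).
    - exact (is_derive_scal G y (F x) _ (HG _ Hxy')). }
  assert (Hdy0 : forall x y, U (x, y) -> dy h0 (x, y) = dy h (x, y) - F x * g y).
  { intros x y Hxy'. apply is_derive_unique, Hy0, Hxy'. }
  destruct (additive_split_of_dxdy_0 U h0 HUo HUc) as [a [b Hab]].
  - intros [x y] Hxy'. eexists. exact (Hy0 x y Hxy').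
  - intros [x y] Hxy'. simpl.
    apply (is_derive_ext_loc (fun t => dy h (t, y) - F t * g y)).
    + apply (filter_imp (fun t => U (t, y))); [intros t Ht; symmetry; apply Hdy0, Ht|].
      exact (locally_row_of_open U x y HUo Hxy').
    + replace 0 with (f x * g y - g y * f x) by ring.
      apply (is_derive_minus (V := R_NormedModule)); [exact (Hxy _ Hxy')|].
      apply (is_derive_ext (fun t => g y * F t)); [intros t; apply Rmult_comm|].
      exact (is_derive_scal F x (g y) _ (HF _ Hxy')).
  - intros [x y] Hxy'. simpl.
    apply (continuous_ext_loc _ (fun t => dy h (x, t) - F x * g t)).
    + apply (filter_imp (fun t => U (x, t))); [intros t Ht; symmetry; apply Hdy0, Ht|].
      exact (locally_col_of_open U x y HUo Hxy').
    + apply (continuous_minus (V := R_NormedModule)); [exact (Hcont _ Hxy')|].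
      apply (continuous_mult (K := R_AbsRing)); [apply continuous_const | exact (Hg _ Hxy')].
  - exists a, b. intros z Hz. rewrite <- (Hab z Hz). unfold h0. ring.
Qed.

Lemma dxdy_of_row_decomposition (h : R * R -> R) (c m S : R -> R) (x y dm dS : R) :
  locally x (fun x' => locally y (fun u => h (x', u) = h (x, u) + c x' + m x' * S u)) ->
  ex_derive (fun u => h (x, u)) y -> is_derive m x dm -> is_derive S y dS ->
  dx (dy h) (x, y) = dm * dS.
Proof.
  intros Hdec Hhy Hm HS.
  assert (Hrow : locally x (fun x' => dy h (x', y) = dy h (x, y) + m x' * dS)).
  { eapply filter_imp; [|exact Hdec]. intros x' Hx'.
    assert (Hd : is_derive (fun u => h (x, u) + c x' + m x' * S u) y
                   (Derive (fun u => h (x, u)) y + 0 + m x' * dS)).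
    { apply (is_derive_plus (V := R_NormedModule)); [|exact (is_derive_scal S y (m x') dS HS)].
      apply (is_derive_plus (V := R_NormedModule));
        [exact (Derive_correct _ _ Hhy) | apply (is_derive_const (V := R_NormedModule))]. }
    rewrite Rplus_0_r in Hd. apply is_derive_unique.
    exact (is_derive_ext_loc _ _ _ _ (filter_imp _ _ (fun u Hu => eq_sym Hu) Hx') Hd). }
  unfold dx; simpl. apply is_derive_unique.
  apply (is_derive_ext_loc (fun t => dy h (x, y) + m t * dS));
    [apply (filter_imp _ _ (fun t Ht => eq_sym Ht) Hrow)|].
  replace (dm * dS) with (0 + dS * dm) by ring.
  apply (is_derive_plus (V := R_NormedModule)); [apply (is_derive_const (V := R_NormedModule))|].
  apply (is_derive_ext (fun t => dS * m t)); [intros t; apply Rmult_comm|].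
  exact (is_derive_scal m x dS dm Hm).
Qed.

Lemma ln_row_shift_of_pseudo_gaussian (phi : R * R -> R) (s1 s2 s3 : R -> R) s x x' u :
  0 < phi (x, u) -> 0 < phi (x', u) ->
  phi (x, u) = s1 x * s2 u * exp (s * (s3 x * s3 u)) ->
  phi (x', u) = s1 x' * s2 u * exp (s * (s3 x' * s3 u)) ->
  ln (phi (x', u)) = ln (phi (x, u)) + ln (s1 x' / s1 x) + s * (s3 x' - s3 x) * s3 u.
Proof.
  intros P1 P2 E1 E2.
  assert (Hx : s1 x <> 0) by (intros Z; rewrite Z in E1; lra).
  assert (Hu : s2 u <> 0) by (intros Z; rewrite Z in E1; lra).
  assert (Hratio : phi (x', u) = phi (x, u) * (s1 x' / s1 x) * exp (s * (s3 x' - s3 x) * s3 u)).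
  { rewrite E1, E2.
    replace (s * (s3 x' * s3 u)) with (s * (s3 x * s3 u) + s * (s3 x' - s3 x) * s3 u) by ring.
    rewrite exp_plus. field. exact Hx. }
  assert (Hpos : 0 < s1 x' / s1 x).
  { pose proof (exp_pos (s * (s3 x' - s3 x) * s3 u)) as He.
    replace (s1 x' / s1 x) with (phi (x', u) / (phi (x, u) * exp (s * (s3 x' - s3 x) * s3 u))).
    - apply Rdiv_lt_0_compat; [exact P2 | apply Rmult_lt_0_compat; assumption].
    - rewrite Hratio. field. repeat split; [exact Hx | apply Rgt_not_eq; assumption ..]. }
  rewrite Hratio, ln_mult, ln_mult, ln_exp; try assumption.
  - reflexivity.
  - apply Rmult_lt_0_compat; assumption.
  - apply exp_pos.
Qed.

Lemma separable_symmetric_factor (O : R * R -> Prop) (phi : R * R -> R) :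
  open O -> convex_set O -> symmetric_set O -> (exists z, O z) ->
  (forall z, O z -> phi z <> 0) -> separable_on O phi -> symmetric_on O phi ->
  exists (c : R) (f : R -> R), forall x y, O (x, y) -> phi (x, y) = c * f x * f y.
Proof.
  intros HOo HOc Hsym [[x0 y0] H0] Hnz [f1 [f2 Hf]] Hphisym.
  assert (Hf12 : forall x y, O (x, y) -> f1 y * f2 x = f1 x * f2 y /\ f2 x <> 0).
  { intros x y Hxy. pose proof (proj1 (Hsym x y) Hxy) as Hyx.
    pose proof (Hphisym x y Hxy) as E. rewrite (Hf _ Hxy), (Hf _ Hyx) in E.
    pose proof (Hnz _ Hyx) as N. rewrite (Hf _ Hyx) in N. simpl in E, N.
    split; [exact E | intros Z; apply N; rewrite Z; ring]. }
  set (r := fun t => f1 t / f2 t).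
  assert (Hr : forall x y, O (x, y) -> r x = r y).
  { intros x y Hxy. destruct (Hf12 x y Hxy) as [E Hx].
    destruct (Hf12 y x (proj1 (Hsym x y) Hxy)) as [_ Hy].
    unfold r. field_simplify_eq; [lra | split; assumption]. }
  assert (Hrc : forall t, (exists x, O (x, t)) -> r t = r y0).
  { intros t Ht. apply eq_of_is_derive_0. intros u Hu.
    destruct (is_interval_proj2 O HOc t y0 u Ht (ex_intro _ x0 H0) Hu) as [x Hxu].
    apply (is_derive_ext_loc (fun _ => r u)); [|apply (is_derive_const (V := R_NormedModule))].
    eapply filter_imp; [|exact (locally_col_of_open O x u HOo Hxu)].
    intros v Hv. rewrite <- (Hr x u Hxu). apply Hr, Hv. }
  exists (r y0), f2. intros x y Hxy. rewrite (Hf _ Hxy). simpl.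
  rewrite <- (Hrc x (ex_intro _ y (proj1 (Hsym x y) Hxy))). unfold r.
  field. exact (proj2 (Hf12 x y Hxy)).
Qed.

Section LogMixedDerivative.

Variables (G : R * R -> Prop) (zeta : R * R -> R).
Hypothesis G_open : open G.
Hypothesis zeta_pos : forall z, G z -> 0 < zeta z.
Hypothesis zeta_C2 : C2_on G zeta.

Let L : R * R -> R := fun z => ln (zeta z).

Lemma is_derive_log_y x y :
  G (x, y) -> is_derive (fun t => L (x, t)) y (dy zeta (x, y) / zeta (x, y)).
Proof.
  intros Hxy. destruct (proj1 zeta_C2 _ Hxy) as [_ [Hy _]].
  apply (is_derive_comp ln (fun t => zeta (x, t))).
  - apply is_derive_ln, zeta_pos, Hxy.
  - exact (Derive_correct _ _ Hy).
Qed.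

Lemma dy_log x y : G (x, y) -> dy L (x, y) = dy zeta (x, y) / zeta (x, y).
Proof. intros Hxy. apply is_derive_unique, is_derive_log_y, Hxy. Qed.

Lemma is_derive_dy_log_x x y : G (x, y) ->
  is_derive (fun t => dy L (t, y)) x
    ((dx (dy zeta) (x, y) * zeta (x, y) - dy zeta (x, y) * dx zeta (x, y)) / zeta (x, y) ^ 2).
Proof.
  intros Hxy. destruct (proj1 zeta_C2 _ Hxy) as [Hx _].
  destruct (proj2 (proj2 zeta_C2) _ Hxy) as [Hdyx _].
  apply (is_derive_ext_loc (fun t => dy zeta (t, y) / zeta (t, y))).
  - apply (filter_imp (fun t => G (t, y))); [intros t Ht; symmetry; apply dy_log, Ht|].
    exact (locally_row_of_open G x y G_open Hxy).
  - apply is_derive_div;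
      [exact (Derive_correct _ _ Hdyx) | exact (Derive_correct _ _ Hx)
      | apply Rgt_not_eq, zeta_pos, Hxy].
Qed.

Lemma dxdy_log_formula x y : G (x, y) ->
  dxdy_log zeta (x, y)
  = (dx (dy zeta) (x, y) * zeta (x, y) - dy zeta (x, y) * dx zeta (x, y)) / zeta (x, y) ^ 2.
Proof. intros Hxy. apply is_derive_unique, is_derive_dy_log_x, Hxy. Qed.

Lemma is_derive_dy_log x y : G (x, y) -> is_derive (fun t => dy L (t, y)) x (dxdy_log zeta (x, y)).
Proof. intros Hxy. rewrite dxdy_log_formula by exact Hxy. apply is_derive_dy_log_x, Hxy. Qed.

Lemma continuous_dy_log_y x y : G (x, y) -> continuous (fun t => dy L (x, t)) y.
Proof.
  intros Hxy. destruct (proj1 zeta_C2 _ Hxy) as [_ [_ [Hc [_ Hcy]]]].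
  apply (continuous_ext_loc _ (fun t => dy zeta (x, t) * / zeta (x, t))).
  - apply (filter_imp (fun t => G (x, t))); [intros t Ht; symmetry; apply dy_log, Ht|].
    exact (locally_col_of_open G x y G_open Hxy).
  - apply (continuous_mult (K := R_AbsRing)); [exact (continuous_col _ x y Hcy)|].
    apply continuous_Rinv_comp; [exact (continuous_col _ x y Hc)|].
    apply Rgt_not_eq, zeta_pos, Hxy.
Qed.

Lemma continuous_dxdy_log_y x y : G (x, y) -> continuous (fun t => dxdy_log zeta (x, t)) y.
Proof.
  intros Hxy. destruct (proj1 zeta_C2 _ Hxy) as [_ [_ [Hc [Hcx Hcy]]]].
  destruct (proj2 (proj2 zeta_C2) _ Hxy) as [_ [_ [_ [Hcxy _]]]].
  apply (continuous_ext_loc _ (fun t => (dx (dy zeta) (x, t) * zeta (x, t)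
             - dy zeta (x, t) * dx zeta (x, t)) * / (zeta (x, t) * zeta (x, t)))).
  - apply (filter_imp (fun t => G (x, t))); [|exact (locally_col_of_open G x y G_open Hxy)].
    intros t Ht. symmetry. etransitivity; [apply dxdy_log_formula, Ht|].
    unfold Rdiv. simpl. rewrite Rmult_1_r. reflexivity.
  - apply (continuous_mult (K := R_AbsRing)).
    + apply (continuous_minus (V := R_NormedModule));
        apply (continuous_mult (K := R_AbsRing)); apply continuous_col; assumption.
    + apply continuous_Rinv_comp.
      * apply (continuous_mult (K := R_AbsRing)); apply continuous_col; assumption.
      * apply Rmult_integral_contrapositive. split; apply Rgt_not_eq, zeta_pos, Hxy.
Qed.

Section PseudoGaussian.

Variables (O : R * R -> Prop) (s1 s2 s3 : R -> R) (s : R).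
Hypothesis O_open : open O.
Hypothesis O_sub : forall z, O z -> G z.
Hypothesis zeta_pseudo_gaussian : forall z, O z ->
  zeta z = s1 (fst z) * s2 (snd z) * exp (s * (s3 (fst z) * s3 (snd z))).

Lemma log_row_shift x x' u : O (x, u) -> O (x', u) ->
  L (x', u) = L (x, u) + ln (s1 x' / s1 x) + s * (s3 x' - s3 x) * s3 u.
Proof.
  intros H1 H2. apply (ln_row_shift_of_pseudo_gaussian zeta s1 s2 s3).
  - apply zeta_pos, O_sub, H1.
  - apply zeta_pos, O_sub, H2.
  - apply zeta_pseudo_gaussian, H1.
  - apply zeta_pseudo_gaussian, H2.
Qed.

Lemma dxdy_log_eq_0_of_locally_const x y :
  O (x, y) -> locally x (fun x' => s3 x' = s3 x) -> dxdy_log zeta (x, y) = 0.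
Proof.
  intros Hxy Hconst. rewrite <- (Rmult_0_l 0).
  apply (dxdy_of_row_decomposition L (fun x' => ln (s1 x' / s1 x)) (fun _ => 0) (fun _ => 0)).
  - eapply filter_imp; [|exact (filter_and _ _ Hconst (locally_rows_of_open O x y O_open Hxy))].
    intros x' [Hs Hrows]. eapply filter_imp; [|exact Hrows].
    intros u [H1 H2]. etransitivity; [exact (log_row_shift x x' u H2 H1)|].
    rewrite Hs, Rminus_eq_0, Rmult_0_r, !Rmult_0_l. reflexivity.
  - eexists. apply is_derive_log_y, O_sub, Hxy.
  - apply (is_derive_const (V := R_NormedModule)).
  - apply (is_derive_const (V := R_NormedModule)).
Qed.

Hypothesis O_nondegenerate : forall z, O z -> dxdy_log zeta z <> 0.
Hypothesis s_neq_0 : s <> 0.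

Lemma ex_derive_exponent x y : O (x, y) -> ex_derive s3 y.
Proof.
  intros Hxy. destruct (classic (locally x (fun x' => s3 x' = s3 x))) as [Hconst | Hvar].
  { exfalso. exact (O_nondegenerate _ Hxy (dxdy_log_eq_0_of_locally_const x y Hxy Hconst)). }
  destruct (locally_rows_of_open O x y O_open Hxy) as [e He].
  assert (Hx' : exists x' : R, ball x e x' /\ s3 x' <> s3 x).
  { apply NNPP. intros Hn. apply Hvar. exists e. intros x' Hx'.
    apply NNPP. intros Hne. apply Hn. exists x'. split; assumption. }
  destruct Hx' as [x' [Hx'e Hne]].
  assert (Hs3 : forall u, O (x', u) -> O (x, u) ->
            s3 u = / (s * (s3 x' - s3 x)) * (L (x', u) - L (x, u) - ln (s1 x' / s1 x))).
  { intros u H1 H2. rewrite (log_row_shift x x' u H2 H1). field. split; [lra | exact s_neq_0]. }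
  apply (ex_derive_ext_loc
           (fun u => / (s * (s3 x' - s3 x)) * (L (x', u) - L (x, u) - ln (s1 x' / s1 x)))).
  - eapply filter_imp; [|exact (He x' Hx'e)]. intros u [H1 H2]. exact (eq_sym (Hs3 u H1 H2)).
  - apply ex_derive_scal, (ex_derive_minus (V := R_NormedModule));
      [apply (ex_derive_minus (V := R_NormedModule))
      | apply (ex_derive_const (V := R_NormedModule))];
      eexists; apply is_derive_log_y, O_sub.
    + exact (proj1 (locally_singleton _ _ (He x' Hx'e))).
    + exact Hxy.
Qed.

Hypothesis O_symmetric : symmetric_set O.

Lemma dxdy_log_pseudo_gaussian x y :
  O (x, y) -> dxdy_log zeta (x, y) = s * Derive s3 x * Derive s3 y.
Proof.
  intros Hxy. pose proof (proj1 (O_symmetric x y) Hxy) as Hyx.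
  apply (dxdy_of_row_decomposition L (fun x' => ln (s1 x' / s1 x))
           (fun x' => s * (s3 x' - s3 x)) s3).
  - eapply filter_imp; [|exact (locally_rows_of_open O x y O_open Hxy)].
    intros x' Hrows. eapply filter_imp; [|exact Hrows].
    intros u [H1 H2]. exact (log_row_shift x x' u H2 H1).
  - eexists. apply is_derive_log_y, O_sub, Hxy.
  - replace (Derive s3 x) with (Derive s3 x - 0) by ring.
    apply is_derive_scal, (is_derive_minus (V := R_NormedModule));
      [exact (Derive_correct _ _ (ex_derive_exponent y x Hyx))
      | apply (is_derive_const (V := R_NormedModule))].
  - exact (Derive_correct _ _ (ex_derive_exponent x y Hxy)).
Qed.

End PseudoGaussian.

Lemma dxdy_log_eq_0_of_separable (U : R * R -> Prop) :
  open U -> (forall z, U z -> G z) -> separable_on U zeta ->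
  forall z, U z -> dxdy_log zeta z = 0.
Proof.
  intros HUo HUG [s1 [s2 Hs]] [x y] Hxy.
  (* A separable zeta is pseudo-Gaussian with exponent s3 = 0. *)
  apply (dxdy_log_eq_0_of_locally_const U s1 s2 (fun _ => 0) 1 HUo HUG); [|exact Hxy|].
  - intros z Hz. rewrite (Hs z Hz), Rmult_0_l, Rmult_0_r, exp_0, Rmult_1_r. reflexivity.
  - apply filter_forall. reflexivity.
Qed.

Lemma separable_of_dxdy_log_eq_0 (U : R * R -> Prop) :
  open U -> convex_set U -> (forall z, U z -> G z) ->
  (forall z, U z -> dxdy_log zeta z = 0) -> separable_on U zeta.
Proof.
  intros HUo HUc HUG H0.
  destruct (additive_split_of_dxdy_0 U L HUo HUc) as [a [b Hab]].
  - intros [x y] Hxy. eexists. apply is_derive_log_y, HUG, Hxy.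
  - intros [x y] Hxy. rewrite <- (H0 _ Hxy). apply is_derive_dy_log, HUG, Hxy.
  - intros [x y] Hxy. apply continuous_dy_log_y, HUG, Hxy.
  - exists (fun x => exp (a x)), (fun y => exp (b y)). intros z Hz.
    rewrite <- exp_plus, <- (Hab z Hz). symmetry. apply exp_ln, zeta_pos, HUG, Hz.
Qed.

Lemma strictly_non_separable_iff_dense :
  strictly_non_separable_on G zeta <-> dense_in (fun z => G z /\ dxdy_log zeta z <> 0) G.
Proof.
  split.
  - intros Hsns [x y] Hxy eps Heps. apply NNPP. intros Hnone.
    destruct (open_locally_2d G x y G_open Hxy) as [d Hd].
    set (r := Rmin eps d).
    assert (Hr : 0 < r) by (apply Rmin_glb_lt; [exact Heps | apply cond_pos]).
    assert (Hsq : forall w, square (x, y) r w -> G w /\ dxdy_log zeta w = 0).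
    { intros [u v] [Hu Hv]; simpl in Hu, Hv.
      assert (HG : G (u, v)) by (apply Hd; eapply Rlt_le_trans; eauto; apply Rmin_r).
      split; [exact HG|]. apply NNPP. intros Hne. apply Hnone. exists (u, v).
      split; [split; assumption|]. simpl. split; eapply Rlt_le_trans; eauto; apply Rmin_l. }
    apply (Hsns (square (x, y) r) (open_square _ _) (ex_intro _ _ (square_center _ _ Hr))
             (fun w Hw => proj1 (Hsq w Hw))).
    apply separable_of_dxdy_log_eq_0;
      [apply open_square | apply convex_square | exact (fun w Hw => proj1 (Hsq w Hw))
      | exact (fun w Hw => proj2 (Hsq w Hw))].
  - intros Hdense O HOo [[x y] Hxy] HOG Hsep.
    destruct (open_locally_2d O x y HOo Hxy) as [d Hd].
    destruct (Hdense (x, y) (HOG _ Hxy) d (cond_pos d)) as [[u v] [[_ Hne] [Hu Hv]]].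
    apply Hne, (dxdy_log_eq_0_of_separable O HOo HOG Hsep), Hd; assumption.
Qed.

Lemma separable_symmetric_of_pseudo_gaussian (O : R * R -> Prop) :
  (forall z, O z -> G z /\ dxdy_log zeta z <> 0) -> symmetric_set O -> open O ->
  pseudo_gaussian_on O zeta ->
  separable_on O (dxdy_log zeta) /\ symmetric_on O (dxdy_log zeta).
Proof.
  intros HO Hsym HOo [s1 [s2 [s3 [s [Hs Hpg]]]]].
  assert (Hs0 : s <> 0) by (destruct Hs; lra).
  pose proof (dxdy_log_pseudo_gaussian O s1 s2 s3 s HOo (fun z Hz => proj1 (HO z Hz)) Hpg
                (fun z Hz => proj2 (HO z Hz)) Hs0 Hsym) as Hphi.
  split.
  - exists (fun x => s * Derive s3 x), (Derive s3). intros [x y] Hxy. exact (Hphi x y Hxy).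
  - intros u v Huv. rewrite (Hphi u v Huv), (Hphi v u (proj1 (Hsym u v) Huv)). ring.
Qed.

Lemma continuous_dxdy_log_factor (O : R * R -> Prop) (c : R) (f : R -> R) :
  open O -> (forall z, O z -> G z /\ dxdy_log zeta z <> 0) ->
  (forall x y, O (x, y) -> dxdy_log zeta (x, y) = c * f x * f y) ->
  forall x y, O (x, y) -> continuous f y.
Proof.
  intros HOo HO Hcf x y Hxy.
  assert (Hcfx : c * f x <> 0).
  { intros Z. apply (proj2 (HO _ Hxy)). rewrite (Hcf x y Hxy), Z. ring. }
  assert (Hft : forall t, O (x, t) -> dxdy_log zeta (x, t) * / (c * f x) = f t).
  { intros t Ht. rewrite (Hcf x t Ht). field. split; intros Z; apply Hcfx; rewrite Z; ring. }
  apply (continuous_ext_loc _ (fun t => dxdy_log zeta (x, t) * / (c * f x))).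
  - eapply filter_imp; [|exact (locally_col_of_open O x y HOo Hxy)]. exact Hft.
  - apply (continuous_mult (K := R_AbsRing)); [|apply continuous_const].
    exact (continuous_dxdy_log_y x y (proj1 (HO _ Hxy))).
Qed.

Lemma pseudo_gaussian_of_separable_symmetric (O : R * R -> Prop) :
  (forall z, O z -> G z /\ dxdy_log zeta z <> 0) -> symmetric_set O -> open O -> convex_set O ->
  separable_on O (dxdy_log zeta) -> symmetric_on O (dxdy_log zeta) ->
  pseudo_gaussian_on O zeta.
Proof.
  intros HO Hsym HOo HOc Hsep Hphisym.
  destruct (classic (exists z, O z)) as [Hne | Hempty].
  2: { exists (fun _ => 0), (fun _ => 0), (fun _ => 0), 1. split; [left; reflexivity|].
       intros z Hz. exfalso. apply Hempty. exists z. exact Hz. }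
  destruct (separable_symmetric_factor O (dxdy_log zeta) HOo HOc Hsym Hne
              (fun z Hz => proj2 (HO z Hz)) Hsep Hphisym) as [c [f Hcf]].
  assert (HO1 : forall x y, O (x, y) -> exists y', O (y', x))
    by (intros x y Hxy; exists y; apply Hsym, Hxy).
  assert (Hf : forall y, (exists x, O (x, y)) -> continuous f y).
  { intros y [x Hxy]. exact (continuous_dxdy_log_factor O c f HOo HO Hcf x y Hxy). }
  destruct (antiderivative_on_interval _ f (is_interval_proj2 O HOc) (open_proj2 O HOo) Hf)
    as [F HF].
  destruct (additive_split_of_dxdy_product O L (fun x => c * f x) f (fun x => c * F x) F HOo HOc)
    as [a [b Hab]].
  - intros [x y] Hxy. eexists. apply is_derive_log_y, (proj1 (HO _ Hxy)).
  - intros [x y] Hxy. simpl. replace (c * f x * f y) with (dxdy_log zeta (x, y)) by apply Hcf, Hxy.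
    apply is_derive_dy_log, (proj1 (HO _ Hxy)).
  - intros [x y] Hxy. apply continuous_dy_log_y, (proj1 (HO _ Hxy)).
  - intros [x y] Hxy. apply is_derive_scal, HF, (HO1 x y Hxy).
  - intros [x y] Hxy. apply HF. exists x. exact Hxy.
  - intros [x y] Hxy. apply Hf. exists x. exact Hxy.
  - destruct (signed_square c) as [k [s [Hs Hc]]].
    exists (fun x => exp (a x)), (fun y => exp (b y)), (fun t => k * F t), s.
    split; [exact Hs|]. intros z Hz. rewrite <- !exp_plus, <- (exp_ln (zeta z)).
    + f_equal. change (L z = a (fst z) + b (snd z) + s * (k * F (fst z) * (k * F (snd z)))).
      rewrite (Hab z Hz), Hc. ring.
    + apply zeta_pos, (proj1 (HO z Hz)).
Qed.

End LogMixedDerivative.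

Theorem lemma3p11 (G : R * R -> Prop) (zeta : R * R -> R) :
  open G ->
  (forall z, G z -> 0 < zeta z) ->
  C2_on G zeta ->
  (convex_set G ->
     ((forall z, G z -> dxdy_log zeta z = 0) <-> separable_on G zeta)) /\
  (strictly_non_separable_on G zeta <->
     dense_in (fun z => G z /\ dxdy_log zeta z <> 0) G) /\
  (forall O : R * R -> Prop,
     (forall z, O z -> G z /\ dxdy_log zeta z <> 0) ->
     symmetric_set O -> open O -> convex_set O ->
     ((separable_on O (dxdy_log zeta) /\ symmetric_on O (dxdy_log zeta)) <->
      pseudo_gaussian_on O zeta)).
Proof.
  intros HG Hpos HC2. split; [|split].
  - intros Hconv. split.
    + exact (separable_of_dxdy_log_eq_0 G zeta HG Hpos HC2 G HG Hconv (fun z Hz => Hz)).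
    + exact (dxdy_log_eq_0_of_separable G zeta Hpos HC2 G HG (fun z Hz => Hz)).
  - exact (strictly_non_separable_iff_dense G zeta HG Hpos HC2).
  - intros O HO Hsym HOo HOc. split.
    + intros [Hsep Hphisym].
      exact (pseudo_gaussian_of_separable_symmetric G zeta HG Hpos HC2 O HO Hsym HOo HOc
               Hsep Hphisym).
    + exact (separable_symmetric_of_pseudo_gaussian G zeta Hpos HC2 O HO Hsym HOo).
Qed.
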